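(* Let $n\ge 6$ be even. Then the largest $3\cdot|E_{n-2}|$ elements of $E_n$ are exactly the elements of $$\{x+2^{n-1}: x\in E_{n-2}\}\cup\{x+5\cdot 2^{n-3}: x\in E_{n-2}\}\cup\{x+3\cdot 2^{n-2}: x\in E_{n-2}\},$$ and in increasing order they consist of the elements of $E_{n-2}$ shifted by $2^{n-1}$, followed by those shifted by $5\cdot2^{n-3}$, followed by those shifted by $3\cdot 2^{n-2}$ (the last block ending at $M_n=2^n-1$).
   Context: Let $D$ (OEIS A036991) be the set of nonnegative integers $m$ such that, reading the binary expansion of $m$ from the least significant bit to the most significant bit, at every point the number of 1's read so far is at least the number of 0's read so far. For $n\ge1$ let $M_n=2^n-1$ and let the $n$-level be $E_n=D\cap(M_{n-1},M_n]$, i.e. the elements of $D$ whose binary expansion has exactly $n$ digits. *)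

From mathcomp Require Import all_boot.
Set Implicit Arguments. Unset Strict Implicit. Unset Printing Implicit Defensive.

(* Binary expansion of m, least significant bit first (true = digit 1).
   The fuel m suffices since m./2 < m for m > 0; bits 0 = [::]. *)
Fixpoint bits_aux (fuel m : nat) : seq bool :=
  match fuel with
  | 0 => [::]
  | f.+1 => if m == 0 then [::] else odd m :: bits_aux f m./2
  end.
Definition bits (m : nat) : seq bool := bits_aux m m.

(* m \in D (OEIS A036991): reading the binary expansion from the LSB,
   at every point (#1's read so far) >= (#0's read so far). *)
Definition inD (m : nat) : bool :=
  let s := bits m in
  all (fun k => count negb (take k s) <= count id (take k s))
      (iota 0 (size s).+1).

Definition M (n : nat) : nat := 2 ^ n - 1.

Definition inE (n m : nat) : bool := [&& M n.-1 < m, m <= M n & inD m].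

Definition Eseq (n : nat) : seq nat := [seq m <- iota 0 (M n).+1 | inE n m].

From Pilot Require Import Defs.
From mathcomp Require Import all_boot.
From mathcomp Require Import zify.

(* Write n = a + 3 with a odd.  Each m in [c 2^a, (c + 1) 2^a) with c in
   {5, 6, 7} is y + c 2^a with y < 2^a, and its binary expansion (least
   significant bit first) is the a low bits of y followed by the expansion
   101, 011 or 111 of c.  A ballot word of odd length a has strictly more 1's
   than 0's, so it absorbs the single surplus 0 these suffixes can create:
   y + c 2^a lies in D iff y + 2^a does, i.e. iff y + 2^a lies in E_{n-2}.
   Hence the top three eighths of [0, 2^n) contribute three shifted copies of
   E_{n-2}, and M_n, whose expansion is all 1's, ends E_n. *)

Lemma bits_aux_fuel f g m : m <= f -> m <= g -> bits_aux f m = bits_aux g m.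
Proof.
elim: f g m => [|f IHf] [|g] m /= le_mf le_mg //; try by case: m le_mf le_mg.
case: eqP => // /eqP m_neq0; congr (_ :: _); apply: IHf; rewrite -divn2; lia.
Qed.

Lemma bits_gt0 m : 0 < m -> bits m = odd m :: bits m./2.
Proof.
case: m => // m _; rewrite [LHS]/bits [LHS]/=; congr (_ :: _).
apply: bits_aux_fuel => //.
by rewrite uphalf_half -[leqRHS]odd_double_half -addnn leq_add2l leq_addr.
Qed.

Fixpoint low_bits k m := if k is k'.+1 then odd m :: low_bits k' m./2 else [::].

Lemma size_low_bits k m : size (low_bits k m) = k.
Proof. by elim: k m => //= k IHk m; rewrite IHk. Qed.

Lemma bits_shift a y c : 0 < c -> y < 2 ^ a ->
  bits (y + c * 2 ^ a) = low_bits a y ++ bits c.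
Proof.
move=> c_gt0; elim: a y => [|a IHa] y y_lt.
  by move: y_lt; rewrite expn0 ltnS leqn0 => /eqP->; rewrite add0n muln1.
have -> : y + c * 2 ^ a.+1 = odd y + (y./2 + c * 2 ^ a).*2.
  by have := odd_double_half y; rewrite expnS -!muln2; lia.
rewrite bits_gt0 ?half_bit_double ?IHa; last 2 first.
- by rewrite -divn2; rewrite expnS in y_lt; lia.
- by rewrite addn_gt0 double_gt0 addn_gt0 muln_gt0 c_gt0 expn_gt0 !orbT.
by rewrite oddD odd_double oddb addbF.
Qed.

Lemma bits_mask n : bits (2 ^ n - 1) = nseq n true.
Proof.
elim: n => // n IHn; have pow_gt0 : 0 < 2 ^ n by rewrite expn_gt0.
have -> : 2 ^ n.+1 - 1 = true + (2 ^ n - 1).*2 by rewrite expnS; lia.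
by rewrite bits_gt0 ?half_bit_double ?IHn // oddD odd_double.
Qed.

Definition ballot (d : nat) (s : seq bool) :=
  all (fun k => count negb (take k s) <= d + count id (take k s))
      (iota 0 (size s).+1).

Lemma inD_ballot m : inD m = ballot 0 (bits m).
Proof. by []. Qed.

Lemma ballotP d s :
  reflect (forall k, count negb (take k s) <= d + count id (take k s))
          (ballot d s).
Proof.
apply: (iffP allP) => [prefix_ok k | prefix_ok k _]; last exact: prefix_ok.
have [le_ks | lt_sk] := leqP k (size s); first by apply: prefix_ok; rewrite mem_iota.
rewrite take_oversize ?(ltnW lt_sk) //.
by rewrite -(take_size s) prefix_ok // mem_iota add0n ltnS leqnn.
Qed.

Lemma ballot_odd_lead s : ballot 0 s -> odd (size s) ->
  (count negb s).+1 <= count id s.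
Proof.
move=> /ballotP/(_ (size s)); rewrite take_size add0n leq_eqVlt => /orP[/eqP eq_count|//].
by rewrite -(count_predC id s) -eq_count addnn odd_double.
Qed.

Lemma ballot_cat_odd s t : odd (size s) -> ballot 1 t ->
  ballot 0 (s ++ t) = ballot 0 s.
Proof.
move=> odd_s /ballotP t_ok; apply/ballotP/idP => [st_ok | s_ballot k].
  apply/ballotP => k; have [lt_ks | le_sk] := ltnP k (size s).
    by have := st_ok k; rewrite take_cat lt_ks.
  by have := st_ok (size s); rewrite take_cat ltnn subnn take0 cats0 take_oversize.
have lead_s := ballot_odd_lead s s_ballot odd_s.
rewrite take_cat; case: ltnP => _; first exact: (ballotP _ _ s_ballot).
by have := t_ok (k - size s); rewrite !count_cat; lia.
Qed.

Lemma inD_shift a y c : odd a -> y < 2 ^ a -> 0 < c -> ballot 1 (bits c) ->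
  inD (y + c * 2 ^ a) = inD (y + 2 ^ a).
Proof.
move=> odd_a y_lt c_gt0 c_ballot; rewrite -[2 ^ a in RHS]mul1n !inD_ballot.
by rewrite !bits_shift // !ballot_cat_odd ?size_low_bits.
Qed.

Lemma M_succ n : (M n).+1 = 2 ^ n.
Proof. by rewrite /M subn1 prednK ?expn_gt0. Qed.

Lemma inE_level n m : 2 ^ n.-1 <= m < 2 ^ n -> Defs.inE n m = inD m.
Proof. by rewrite /Defs.inE -[m <= M n]ltnS !M_succ => /andP[-> ->]. Qed.

Lemma filter_level_iota n lo k : 2 ^ n.-1 <= lo -> lo + k <= 2 ^ n ->
  [seq m <- iota lo k | Defs.inE n m] = [seq y + lo | y <- iota 0 k & inD (y + lo)].
Proof.
move=> lo_ge lo_le; rewrite -[lo in iota lo]addn0 iotaDl filter_map (eq_map (addnC lo)).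
congr map; apply: eq_in_filter => y; rewrite mem_iota /= => y_lt.
by rewrite addnC inE_level //; apply/andP; split; lia.
Qed.

Lemma Eseq_succ a : Eseq a.+1 = [seq y + 2 ^ a | y <- iota 0 (2 ^ a) & inD (y + 2 ^ a)].
Proof.
rewrite /Eseq M_succ expnS mul2n -addnn iotaD filter_cat add0n.
rewrite (@filter_level_iota _ (2 ^ a)) //; last by rewrite addnn -mul2n expnS.
rewrite (@eq_in_filter _ _ pred0) ?filter_pred0 // => m.
rewrite mem_iota add0n => /andP[_ m_lt].
by rewrite /Defs.inE ltnNge (_ : m <= M a) // -ltnS M_succ.
Qed.

Lemma Eseq_top_block a c : odd a -> c \in [:: 5; 6; 7] ->
  [seq m <- iota (c * 2 ^ a) (2 ^ a) | Defs.inE a.+3 m] =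
  [seq x + c.-1 * 2 ^ a | x <- Eseq a.+1].
Proof.
move=> odd_a c_top; have [c_ge5 c_lt8 c_ballot] : [/\ 5 <= c, c < 8 & ballot 1 (bits c)].
  by move: c_top; rewrite !inE => /or3P[] /eqP->.
rewrite filter_level_iota /=; [| by rewrite !expnS; nia ..].
rewrite Eseq_succ -map_comp (@eq_in_filter _ _ (fun y => inD (y + 2 ^ a))).
  by apply: eq_map => y /=; rewrite -addnA -mulSn prednK //; lia.
by move=> y; rewrite mem_iota => y_lt; apply: inD_shift => //; lia.
Qed.

Lemma Eseq_top_blocks a : odd a -> Eseq a.+3 =
  [seq m <- iota 0 (5 * 2 ^ a) | Defs.inE a.+3 m] ++
  [seq x + 4 * 2 ^ a | x <- Eseq a.+1] ++
  [seq x + 5 * 2 ^ a | x <- Eseq a.+1] ++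
  [seq x + 6 * 2 ^ a | x <- Eseq a.+1].
Proof.
move=> odd_a; have top_split : 2 ^ a.+3 = 5 * 2 ^ a + 2 ^ a + 2 ^ a + 2 ^ a.
  by rewrite !expnS; lia.
rewrite {1}/Eseq M_succ top_split !iotaD !filter_cat -!catA add0n -!mulSnr.
by rewrite !Eseq_top_block.
Qed.

Lemma inD_M n : inD (M n).
Proof.
rewrite inD_ballot /M bits_mask; apply/ballotP => k.
have [le_kn | /ltnW le_nk] := leqP k n.
  by rewrite take_nseq // count_nseq.
by rewrite take_oversize ?size_nseq // count_nseq.
Qed.

Lemma Eseq_last n : 0 < n -> last 0 (Eseq n) = M n.
Proof.
move=> n_gt0; rewrite /Eseq -addn1 iotaD filter_cat add0n /= inE_level ?inD_M.
  by rewrite cats1 last_rcons.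
case: n n_gt0 => // n _; rewrite /M expnS /=.
have pow_gt0 : 0 < 2 ^ n by rewrite expn_gt0.
lia.
Qed.

Theorem proposition8 (n : nat) :
  6 <= n -> ~~ odd n ->
  3 * size (Eseq (n - 2)) <= size (Eseq n) /\
  drop (size (Eseq n) - 3 * size (Eseq (n - 2))) (Eseq n) =
    [seq x + 2 ^ (n - 1) | x <- Eseq (n - 2)] ++
    [seq x + 5 * 2 ^ (n - 3) | x <- Eseq (n - 2)] ++
    [seq x + 3 * 2 ^ (n - 2) | x <- Eseq (n - 2)] /\
  last 0 (Eseq n) = M n.
Proof.
move=> n_ge6 n_even; have [a n_eq] : exists a, n = a.+3 by exists (n - 3); lia.
subst n; have odd_a : odd a by move: n_even; rewrite /= !negbK.
have -> : 2 ^ (a.+3 - 1) = 4 * 2 ^ a by rewrite subn1 !expnS mulnA.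
have -> : 3 * 2 ^ (a.+3 - 2) = 6 * 2 ^ a by rewrite !subSS subn0 expnS mulnA.
rewrite !subSS !subn0 Eseq_last // Eseq_top_blocks // !size_cat !size_map.
set L := [seq m <- _ | _]; set k := size (Eseq a.+1).
split; first lia.
by rewrite (_ : _ - 3 * k = size L) ?drop_size_cat //; lia.
Qed.
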